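(* Let $X$ be a set and $z$ an element not contained in $X$. Every rack (resp. quandle) on $X$ embeds into a rack (resp. quandle) on $X\cup\{z\}$, i.e., is a subrack (resp. subquandle) of some rack (resp. quandle) defined on $X\cup\{z\}$.
   Context: A rack is a groupoid $(X,* )$ whose left translations $y\mapsto x*y$ are bijections and which satisfies $x*(y*z)=(x*y)*(x*z)$; a quandle is a rack satisfying $x*x=x$. *)

From mathcomp Require Import ssreflect ssrfun ssrbool.
Set Implicit Arguments. Unset Strict Implicit. Unset Printing Implicit Defensive.

Definition is_rack (T : Type) (op : T -> T -> T) : Prop :=
  (forall x : T, bijective (op x)) /\
  (forall x y z : T, op x (op y z) = op (op x y) (op x z)).

Definition is_quandle (T : Type) (op : T -> T -> T) : Prop :=
  is_rack op /\ (forall x : T, op x x = x).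

(* X ∪ {z} with z ∉ X is modelled by [option X]: [Some x] is x ∈ X, [None] is z.
   (X, op) is a subrack/subquandle of (option X, op') when the inclusion
   [Some] is a homomorphism, i.e. op' restricted to X is op. *)
Definition extends (T : Type) (op : T -> T -> T) (op' : option T -> option T -> option T) : Prop :=
  forall x y : T, op' (Some x) (Some y) = Some (op x y).

From mathcomp Require Import ssreflect ssrfun ssrbool.

(* Adjoin z as a point that acts trivially and is fixed by every left
   translation: the disjoint union of the given rack and the one-point quandle,
   each acting trivially on the other.  Both the rack and the quandle axioms
   then reduce to those of the original operation. *)

Definition adjoin_fixed_point {X : Type} (op : X -> X -> X) (a : option X) :
    option X -> option X :=
  if a is Some x then omap (op x) else id.

Lemma bij_omap (aT rT : Type) (f : aT -> rT) :
  bijective f -> bijective (omap f).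
Proof. by case=> g fK gK; exists (omap g); exact: omapK. Qed.

Section AdjoinFixedPoint.

Variables (X : Type) (op : X -> X -> X).

Lemma adjoin_fixed_point_extends : extends op (adjoin_fixed_point op).
Proof. by []. Qed.

Lemma adjoin_fixed_point_rack : is_rack op -> is_rack (adjoin_fixed_point op).
Proof.
case=> op_bij op_distr; split.
- by case=> [x|]; [exact: bij_omap | exists id].
- by case=> [x|] [y|] [z|] //=; rewrite op_distr.
Qed.

Lemma adjoin_fixed_point_quandle :
  is_quandle op -> is_quandle (adjoin_fixed_point op).
Proof.
case=> op_rack op_idem; split; first exact: adjoin_fixed_point_rack.
by case=> [x|] //=; rewrite op_idem.
Qed.

End AdjoinFixedPoint.

Theorem proposition3p9 :
  (forall (X : Type) (op : X -> X -> X), is_rack op ->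
     exists op' : option X -> option X -> option X, is_rack op' /\ extends op op') /\
  (forall (X : Type) (op : X -> X -> X), is_quandle op ->
     exists op' : option X -> option X -> option X, is_quandle op' /\ extends op op').
Proof.
split=> X op op_struct; exists (adjoin_fixed_point op);
  split=> //; [exact: adjoin_fixed_point_rack | exact: adjoin_fixed_point_quandle].
Qed.
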